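(* For every $z\in\mathbb{C}\setminus[0,\infty)$ and every $x\in\mathbb{Z}_+$, $$\xi_z(x)=\int_0^\infty e^{-\eta}(\eta-z)^{-1}\,[\phi_\eta(x)-\phi_z(x)]\,\mathrm{d}\eta .$$
   Context: $\mathbb{Z}_+=\{0,1,2,\dots\}$. $L_0$ is the operator on $\ell^2(\mathbb{Z}_+)$ given by $$L_0v(x)=-(x+1)v(x+1)+(2x+1)v(x)-xv(x-1)\quad (x>0),\qquad L_0v(0)=-v(1)+v(0),$$ with domain $\{v:\sum_x x^2|v(x)|^2<\infty\}$. $\overline{L_0}$ is its self-adjoint closure. $\phi_z(x)=\sum_{k=0}^{x}\binom{x}{k}\frac{(-z)^k}{k!}$ (Laguerre polynomials, defined for all $z\in\mathbb{C}$). $\psi_z=(\overline{L_0}-z)^{-1}\chi_0$ is the resolvent vector, and $\xi_z:=\psi_z-\psi_z(0)\phi_z$ is the auxiliary resolvent vector. *)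

From Stdlib Require Import Reals Arith Factorial.
Open Scope R_scope.

Record Cx := mkCx { Re : R; Im : R }.

Definition Cx0 : Cx := mkCx 0 0.
Definition Cx1 : Cx := mkCx 1 0.
Definition RtoCx (r : R) : Cx := mkCx r 0.
Definition Cxadd (a b : Cx) : Cx := mkCx (Re a + Re b) (Im a + Im b).
Definition Cxopp (a : Cx) : Cx := mkCx (- Re a) (- Im a).
Definition Cxsub (a b : Cx) : Cx := Cxadd a (Cxopp b).
Definition Cxmul (a b : Cx) : Cx :=
  mkCx (Re a * Re b - Im a * Im b) (Re a * Im b + Im a * Re b).
Definition Cxnorm2 (a : Cx) : R := Re a * Re a + Im a * Im a.
(* multiplicative inverse (only meaningful for a <> 0) *)
Definition Cxinv (a : Cx) : Cx :=
  mkCx (Re a / Cxnorm2 a) (- Im a / Cxnorm2 a).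
Fixpoint Cxpow (a : Cx) (n : nat) : Cx :=
  match n with O => Cx1 | S m => Cxmul a (Cxpow a m) end.
Fixpoint Cxsum (f : nat -> Cx) (n : nat) : Cx :=
  match n with O => f O | S m => Cxadd (Cxsum f m) (f (S m)) end.

Definition phi (z : Cx) (x : nat) : Cx :=
  Cxsum (fun k => Cxmul (RtoCx (Binomial.C x k / INR (Factorial.fact k)))
                        (Cxpow (Cxopp z) k)) x.

Definition in_l2 (v : nat -> Cx) : Prop :=
  exists B : R, forall M : nat, sum_f_R0 (fun x => Cxnorm2 (v x)) M <= B.

Definition in_dom_L0 (v : nat -> Cx) : Prop :=
  in_l2 v /\
  exists B : R, forall M : nat,
    sum_f_R0 (fun x => INR x * INR x * Cxnorm2 (v x)) M <= B.

Definition L0 (v : nat -> Cx) (x : nat) : Cx :=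
  match x with
  | O => Cxadd (Cxopp (v 1%nat)) (v O)
  | S y => Cxsub (Cxadd (Cxmul (RtoCx (- (INR x + 1))) (v (S x)))
                        (Cxmul (RtoCx (2 * INR x + 1)) (v x)))
                 (Cxmul (RtoCx (INR x)) (v y))
  end.

Definition l2_converges (u : nat -> nat -> Cx) (v : nat -> Cx) : Prop :=
  forall eps : R, 0 < eps -> exists N : nat, forall n : nat, (N <= n)%nat ->
    forall M : nat, sum_f_R0 (fun x => Cxnorm2 (Cxsub (u n x) (v x))) M <= eps.

Definition closure_L0_graph (v w : nat -> Cx) : Prop :=
  in_l2 v /\ in_l2 w /\
  exists u : nat -> nat -> Cx,
    (forall n, in_dom_L0 (u n)) /\
    l2_converges u v /\
    l2_converges (fun n => L0 (u n)) w.

Definition chi0 (x : nat) : Cx := match x with O => Cx1 | _ => Cx0 end.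

(* psi = (closure L_0 - z)^{-1} chi_0 , i.e. psi in dom(closure L_0) and
   (closure L_0) psi - z psi = chi_0 *)
Definition is_resolvent_vector (z : Cx) (psi : nat -> Cx) : Prop :=
  closure_L0_graph psi (fun x => Cxadd (chi0 x) (Cxmul z (psi x))).

Definition xi (z : Cx) (psi : nat -> Cx) (x : nat) : Cx :=
  Cxsub (psi x) (Cxmul (psi O) (phi z x)).

Definition improper_integral_0_inf (F : R -> Cx) (l : Cx) : Prop :=
  forall eps : R, 0 < eps -> exists T0 : R, forall T : R, T0 <= T ->
    exists (pr_re : Riemann_integrable (fun t => Re (F t)) 0 T)
           (pr_im : Riemann_integrable (fun t => Im (F t)) 0 T),
      Rabs (RiemannInt pr_re - Re l) < eps /\
      Rabs (RiemannInt pr_im - Im l) < eps.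

Definition not_in_nonneg_reals (z : Cx) : Prop := ~ (Im z = 0 /\ 0 <= Re z).

(* For x >= 1 the equation (L0 - z) psi_z = chi_0, read at x, says that xi_z obeys the
   three-term recurrence (x+1) f(x+1) = (2x+1-z) f(x) - x f(x-1) of the Laguerre polynomials
   phi_z, while at x = 0 it gives xi_z(1) = -1; also xi_z(0) = 0.  The integrals on the right
   satisfy the same recurrence: subtracting the recurrences of phi_eta and phi_z leaves the
   term -(eta - z) phi_eta(x), and after division by eta - z its integral against e^-eta is
   sum_k binom(x,k) (-1)^k = 0, since the k-th moment of e^-eta is k!.  Their initial values
   are 0 and -int e^-eta = -1. *)

(* Imported first, so that [Re], [Im] name the fields of [Cx] and [C] the binomial coefficient. *)
From Coquelicot Require Import Coquelicot.
From Stdlib Require Import Reals Lra Lia Arith Factorial.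
Open Scope R_scope.

Lemma Cx_eq (a b : Cx) : Re a = Re b -> Im a = Im b -> a = b.
Proof. destruct a, b; simpl; intros; subst; reflexivity. Qed.

Lemma Cxnorm2_ge0 (a : Cx) : 0 <= Cxnorm2 a.
Proof. unfold Cxnorm2; nra. Qed.

Lemma Cxnorm2_eq0 (a : Cx) : Cxnorm2 a = 0 -> a = Cx0.
Proof. destruct a as [x y]; unfold Cxnorm2; simpl; intros H; apply Cx_eq; simpl; nra. Qed.

Lemma Cx_field :
  field_theory Cx0 Cx1 Cxadd Cxmul Cxsub Cxopp (fun a b => Cxmul a (Cxinv b)) Cxinv (@eq Cx).
Proof.
  constructor.
  - constructor; intros; try reflexivity; apply Cx_eq; simpl; ring.
  - intros H; injection H; lra.
  - reflexivity.
  - intros [x y] Hp.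
    assert (Hn : x * x + y * y <> 0) by (intros E; apply Hp, Cxnorm2_eq0, E).
    apply Cx_eq; simpl; unfold Cxnorm2; simpl; field; exact Hn.
Qed.
Add Field Cx_field_inst : Cx_field.

Lemma RtoCx_add (a b : R) : RtoCx (a + b) = Cxadd (RtoCx a) (RtoCx b).
Proof. apply Cx_eq; simpl; ring. Qed.

Lemma RtoCx_mul (a b : R) : RtoCx (a * b) = Cxmul (RtoCx a) (RtoCx b).
Proof. apply Cx_eq; simpl; ring. Qed.

Lemma RtoCx_sub (a b : R) : RtoCx (a - b) = Cxsub (RtoCx a) (RtoCx b).
Proof. apply Cx_eq; simpl; ring. Qed.

Lemma RtoCx_neq0 (r : R) : r <> 0 -> RtoCx r <> Cx0.
Proof. intros Hr E; injection E; exact Hr. Qed.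

Lemma Cxpow_RtoCx (r : R) (k : nat) : Cxpow (RtoCx r) k = RtoCx (r ^ k).
Proof. induction k as [|k IH]; simpl; [reflexivity|]. now rewrite IH, RtoCx_mul. Qed.

Lemma Cxsub_RtoCx_neq0 (z : Cx) (t : R) :
  not_in_nonneg_reals z -> 0 <= t -> Cxsub (RtoCx t) z <> Cx0.
Proof.
  destruct z as [a b]; unfold not_in_nonneg_reals; simpl; intros Hz Ht E.
  injection E; intros Eim Ere; apply Hz; split; lra.
Qed.

Lemma Cxsum_ext (f g : nat -> Cx) (n : nat) :
  (forall k, (k <= n)%nat -> f k = g k) -> Cxsum f n = Cxsum g n.
Proof.
  induction n as [|n IH]; intros H; simpl; [apply H; lia|].
  rewrite IH, H; [reflexivity | lia | intros k Hk; apply H; lia].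
Qed.

Lemma Cxsum_scal (c : Cx) (f : nat -> Cx) (n : nat) :
  Cxsum (fun k => Cxmul c (f k)) n = Cxmul c (Cxsum f n).
Proof. induction n as [|n IH]; simpl; [reflexivity|]. rewrite IH; ring. Qed.

Lemma Cxsum_sub (f g : nat -> Cx) (n : nat) :
  Cxsum (fun k => Cxsub (f k) (g k)) n = Cxsub (Cxsum f n) (Cxsum g n).
Proof. induction n as [|n IH]; simpl; [reflexivity|]. rewrite IH; ring. Qed.

Lemma Cxsum_shift (f : nat -> Cx) (n : nat) :
  Cxsum f (S n) = Cxadd (f O) (Cxsum (fun k => f (S k)) n).
Proof. induction n as [|n IH]; simpl in *; [reflexivity|]. rewrite IH; ring. Qed.

Lemma Cxsum_RtoCx (f : nat -> R) (n : nat) :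
  Cxsum (fun k => RtoCx (f k)) n = RtoCx (sum_f_R0 f n).
Proof. induction n as [|n IH]; simpl; [reflexivity|]. now rewrite IH, RtoCx_add. Qed.

Lemma Cxsum_mul_shift (w : Cx) (f : nat -> Cx) (n : nat) :
  Cxmul w (Cxsum f n) =
  Cxsum (fun k => match k with O => Cx0 | S j => Cxmul w (f j) end) (S n).
Proof. rewrite Cxsum_shift, Cxsum_scal; ring. Qed.

(* Stdlib's [C n k] is not 0 for k > n (truncated subtraction), hence the explicit cut-off. *)
Definition laguerre_coef (n k : nat) : R :=
  if (k <=? n)%nat then C n k / INR (fact k) else 0.

Lemma laguerre_coef_fact (n k : nat) : (k <= n)%nat ->
  laguerre_coef n k = INR (fact n) / (INR (fact k) * INR (fact k) * INR (fact (n - k))).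
Proof.
  intros Hk; unfold laguerre_coef, C.
  destruct (Nat.leb_spec k n); [|lia].
  pose proof (INR_fact_neq_0 k); pose proof (INR_fact_neq_0 (n - k)).
  field; auto.
Qed.

Lemma laguerre_coef_gt (n k : nat) : (n < k)%nat -> laguerre_coef n k = 0.
Proof. intros Hk; unfold laguerre_coef; destruct (Nat.leb_spec k n); [lia|reflexivity]. Qed.

Lemma laguerre_coef_0 (n : nat) : laguerre_coef n 0 = 1.
Proof.
  rewrite laguerre_coef_fact, Nat.sub_0_r by lia; simpl.
  pose proof (INR_fact_neq_0 n); field; auto.
Qed.

Ltac fact_normalize :=
  repeat rewrite ?fact_simpl, ?mult_INR, ?plus_INR, ?S_INR.

Lemma laguerre_coef_rec (m j : nat) :
  (INR (S m) + 1) * laguerre_coef (S (S m)) (S j) =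
  (2 * INR (S m) + 1) * laguerre_coef (S m) (S j) + laguerre_coef (S m) j
  - INR (S m) * laguerre_coef m (S j).
Proof.
  destruct (le_lt_dec (S j) m) as [Hjm|Hmj].
  - destruct (Nat.le_exists_sub (S j) m Hjm) as [d [-> _]].
    rewrite !laguerre_coef_fact by lia.
    replace (S (S (d + S j)) - S j)%nat with (S (S d)) by lia.
    replace (S (d + S j) - S j)%nat with (S d) by lia.
    replace (S (d + S j) - j)%nat with (S (S d)) by lia.
    replace (d + S j - S j)%nat with d by lia.
    fact_normalize.
    pose proof (INR_fact_neq_0 j); pose proof (INR_fact_neq_0 d);
      pose proof (INR_fact_neq_0 (d + S j)); pose proof (pos_INR j); pose proof (pos_INR d).
    field; repeat split; lra.
  - destruct (Nat.eq_dec j m) as [->|Hj]; [|destruct (Nat.eq_dec j (S m)) as [->|Hj']].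
    + rewrite (laguerre_coef_gt m) by lia; rewrite !laguerre_coef_fact by lia.
      replace (S (S m) - S m)%nat with 1%nat by lia.
      replace (S m - m)%nat with 1%nat by lia.
      rewrite Nat.sub_diag; fact_normalize; simpl fact.
      pose proof (INR_fact_neq_0 m); pose proof (pos_INR m).
      simpl INR; field; repeat split; lra.
    + rewrite (laguerre_coef_gt (S m)), (laguerre_coef_gt m) by lia.
      rewrite !laguerre_coef_fact, !Nat.sub_diag by lia.
      pose proof (INR_fact_neq_0 (S m)); pose proof (INR_fact_neq_0 (S (S m))).
      fact_normalize; simpl fact; simpl INR.
      pose proof (INR_fact_neq_0 m); pose proof (pos_INR m).
      field; repeat split; lra.
    + rewrite !laguerre_coef_gt by lia; ring.
Qed.

Definition laguerre_term (z : Cx) (n k : nat) : Cx :=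
  Cxmul (RtoCx (laguerre_coef n k)) (Cxpow (Cxopp z) k).

Lemma phi_term_sum (z : Cx) (n N : nat) : (n <= N)%nat ->
  phi z n = Cxsum (laguerre_term z n) N.
Proof.
  induction 1 as [|N HN IH].
  - apply Cxsum_ext; intros k Hk; unfold laguerre_term, laguerre_coef.
    destruct (Nat.leb_spec k n); [reflexivity|lia].
  - simpl; rewrite IH; unfold laguerre_term.
    rewrite (laguerre_coef_gt n (S N)) by lia; apply Cx_eq; simpl; ring.
Qed.

Lemma phi_0 (z : Cx) : phi z 0 = Cx1.
Proof. apply Cx_eq; simpl; unfold C; simpl; field. Qed.

Lemma phi_1 (z : Cx) : phi z 1 = Cxsub Cx1 z.
Proof. apply Cx_eq; simpl; unfold C; simpl; field. Qed.

Definition laguerre_recurrence (z : Cx) (f : nat -> Cx) : Prop :=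
  forall m : nat,
    Cxmul (RtoCx (INR (S m) + 1)) (f (S (S m))) =
    Cxsub (Cxmul (Cxsub (RtoCx (2 * INR (S m) + 1)) z) (f (S m)))
          (Cxmul (RtoCx (INR (S m))) (f m)).

Lemma phi_recurrence (z : Cx) : laguerre_recurrence z (phi z).
Proof.
  intros m.
  (* Re-index z phi_z(m+1) so that all four sums run to m+2 with aligned powers. *)
  pose proof (Cxsum_mul_shift z (laguerre_term z (S m)) (S m)) as Hz.
  rewrite <- phi_term_sum in Hz by lia.
  transitivity (Cxsub (Cxsub (Cxmul (RtoCx (2 * INR (S m) + 1)) (phi z (S m)))
                             (Cxmul z (phi z (S m))))
                      (Cxmul (RtoCx (INR (S m))) (phi z m))); [|ring].
  rewrite Hz, !(phi_term_sum z _ (S (S m))) by lia.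
  rewrite <- !Cxsum_scal, <- !Cxsum_sub.
  apply Cxsum_ext; intros [|j] _; unfold laguerre_term; cbn [Cxpow].
  - rewrite !laguerre_coef_0; apply Cx_eq; simpl; ring.
  - pose proof (f_equal RtoCx (laguerre_coef_rec m j)) as Hc.
    rewrite RtoCx_sub, RtoCx_add, !RtoCx_mul in Hc.
    transitivity (Cxmul (Cxmul (RtoCx (INR (S m) + 1)) (RtoCx (laguerre_coef (S (S m)) (S j))))
                        (Cxmul (Cxopp z) (Cxpow (Cxopp z) j))); [ring|].
    rewrite Hc; ring.
Qed.

Definition is_Cxlim_seq (a : nat -> Cx) (l : Cx) : Prop :=
  is_lim_seq (fun n => Cxnorm2 (Cxsub (a n) l)) 0.

Lemma Cxnorm2_add_le (p q : Cx) : Cxnorm2 (Cxadd p q) <= 2 * (Cxnorm2 p + Cxnorm2 q).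
Proof.
  destruct p as [a b], q as [c d]; unfold Cxnorm2; simpl.
  pose proof (pow2_ge_0 (a - c)); pose proof (pow2_ge_0 (b - d)); nra.
Qed.

Lemma is_Cxlim_seq_squeeze (a : nat -> Cx) (l : Cx) (u v : nat -> R) :
  (forall n, Cxnorm2 (Cxsub (a n) l) <= 2 * (u n + v n)) ->
  is_lim_seq u 0 -> is_lim_seq v 0 -> is_Cxlim_seq a l.
Proof.
  intros Hle Hu Hv.
  apply (is_lim_seq_le_le (fun _ => 0) _ (fun n => 2 * (u n + v n))).
  - intros n; split; [apply Cxnorm2_ge0|apply Hle].
  - apply is_lim_seq_const.
  - replace (Finite 0) with (Rbar_mult 2 (0 + 0)) by (simpl; f_equal; ring).
    apply is_lim_seq_scal_l, is_lim_seq_plus'; assumption.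
Qed.

Lemma is_Cxlim_seq_add (a b : nat -> Cx) (l m : Cx) :
  is_Cxlim_seq a l -> is_Cxlim_seq b m ->
  is_Cxlim_seq (fun n => Cxadd (a n) (b n)) (Cxadd l m).
Proof.
  intros Ha Hb; refine (is_Cxlim_seq_squeeze _ _ _ _ _ Ha Hb); intros n.
  replace (Cxsub (Cxadd (a n) (b n)) (Cxadd l m)) with (Cxadd (Cxsub (a n) l) (Cxsub (b n) m))
    by ring.
  apply Cxnorm2_add_le.
Qed.

Lemma is_Cxlim_seq_scal (c : Cx) (a : nat -> Cx) (l : Cx) :
  is_Cxlim_seq a l -> is_Cxlim_seq (fun n => Cxmul c (a n)) (Cxmul c l).
Proof.
  intros Ha; unfold is_Cxlim_seq.
  replace (Finite 0) with (Rbar_mult (Cxnorm2 c) 0) by (simpl; f_equal; ring).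
  eapply is_lim_seq_ext; [|apply is_lim_seq_scal_l, Ha].
  intros n; simpl; unfold Cxnorm2; simpl; ring.
Qed.

Lemma is_Cxlim_seq_opp (a : nat -> Cx) (l : Cx) :
  is_Cxlim_seq a l -> is_Cxlim_seq (fun n => Cxopp (a n)) (Cxopp l).
Proof.
  apply is_lim_seq_ext; intros n; unfold Cxnorm2; simpl; ring.
Qed.

Lemma is_Cxlim_seq_unique (a : nat -> Cx) (l m : Cx) :
  is_Cxlim_seq a l -> is_Cxlim_seq a m -> l = m.
Proof.
  intros Hl Hm.
  assert (Hc : is_Cxlim_seq (fun _ => l) m).
  { refine (is_Cxlim_seq_squeeze _ _ _ _ _ Hl Hm); intros n.
    replace (Cxsub l m) with (Cxadd (Cxopp (Cxsub (a n) l)) (Cxsub (a n) m)) by ring.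
    eapply Rle_trans; [apply Cxnorm2_add_le|].
    right; unfold Cxnorm2; simpl; ring. }
  apply is_lim_seq_unique in Hc; rewrite Lim_seq_const in Hc.
  injection Hc; intros H0.
  transitivity (Cxadd (Cxsub l m) m); [ring|].
  rewrite (Cxnorm2_eq0 _ H0); ring.
Qed.

Lemma sum_f_R0_last_le (f : nat -> R) (n : nat) :
  (forall i, 0 <= f i) -> f n <= sum_f_R0 f n.
Proof.
  intros Hf; destruct n as [|n]; simpl; [lra|].
  pose proof (cond_pos_sum f n Hf); lra.
Qed.

Lemma l2_converges_pointwise (u : nat -> nat -> Cx) (v : nat -> Cx) (x : nat) :
  l2_converges u v -> is_Cxlim_seq (fun n => u n x) (v x).
Proof.
  intros H; apply is_lim_seq_spec; intros eps.
  destruct (H (eps / 2)) as [N HN]; [destruct eps; simpl; lra|].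
  exists N; intros n Hn.
  pose proof (sum_f_R0_last_le (fun y => Cxnorm2 (Cxsub (u n y) (v y))) x
                (fun y => Cxnorm2_ge0 _)) as Hx.
  pose proof (HN n Hn x); pose proof (Cxnorm2_ge0 (Cxsub (u n x) (v x))).
  rewrite Rminus_0_r, Rabs_pos_eq by assumption.
  destruct eps; simpl in *; lra.
Qed.

Lemma L0_pointwise_continuous (u : nat -> nat -> Cx) (v : nat -> Cx) (x : nat) :
  (forall y, is_Cxlim_seq (fun n => u n y) (v y)) ->
  is_Cxlim_seq (fun n => L0 (u n) x) (L0 v x).
Proof.
  intros H; destruct x as [|y]; simpl.
  - apply is_Cxlim_seq_add; [apply is_Cxlim_seq_opp|]; apply H.
  - apply is_Cxlim_seq_add; [apply is_Cxlim_seq_add|apply is_Cxlim_seq_opp];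
      apply is_Cxlim_seq_scal, H.
Qed.

Lemma resolvent_equation (z : Cx) (psi : nat -> Cx) (x : nat) :
  is_resolvent_vector z psi -> L0 psi x = Cxadd (chi0 x) (Cxmul z (psi x)).
Proof.
  intros [_ [_ [u [_ [Hu HLu]]]]].
  apply (is_Cxlim_seq_unique (fun n => L0 (u n) x)).
  - apply L0_pointwise_continuous; intros y; apply l2_converges_pointwise, Hu.
  - exact (l2_converges_pointwise _ _ x HLu).
Qed.

Lemma resolvent_recurrence (z : Cx) (psi : nat -> Cx) :
  is_resolvent_vector z psi -> laguerre_recurrence z psi.
Proof.
  intros Hpsi m; pose proof (resolvent_equation z psi (S m) Hpsi) as H.
  cbn [L0 chi0] in H.
  symmetry.
  transitivity (Cxsub (Cxadd (Cxmul (RtoCx (INR (S m) + 1)) (psi (S (S m))))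
                             (Cxsub (Cxadd (Cxmul (RtoCx (- (INR (S m) + 1))) (psi (S (S m))))
                                           (Cxmul (RtoCx (2 * INR (S m) + 1)) (psi (S m))))
                                    (Cxmul (RtoCx (INR (S m))) (psi m))))
                      (Cxmul z (psi (S m)))).
  - apply Cx_eq; simpl; ring.
  - rewrite H; ring.
Qed.

Lemma laguerre_recurrence_sub_scal (z c : Cx) (f g : nat -> Cx) :
  laguerre_recurrence z f -> laguerre_recurrence z g ->
  laguerre_recurrence z (fun x => Cxsub (f x) (Cxmul c (g x))).
Proof.
  intros Hf Hg m.
  transitivity (Cxsub (Cxmul (RtoCx (INR (S m) + 1)) (f (S (S m))))
                      (Cxmul c (Cxmul (RtoCx (INR (S m) + 1)) (g (S (S m)))))); [ring|].
  rewrite Hf, Hg; ring.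
Qed.

Lemma xi_recurrence (z : Cx) (psi : nat -> Cx) :
  is_resolvent_vector z psi -> laguerre_recurrence z (xi z psi).
Proof.
  intros Hpsi.
  exact (laguerre_recurrence_sub_scal z (psi O) _ _
           (resolvent_recurrence z psi Hpsi) (phi_recurrence z)).
Qed.

Lemma xi_0 (z : Cx) (psi : nat -> Cx) : xi z psi 0 = Cx0.
Proof. unfold xi; rewrite phi_0; ring. Qed.

Lemma xi_1 (z : Cx) (psi : nat -> Cx) :
  is_resolvent_vector z psi -> xi z psi 1 = Cxopp Cx1.
Proof.
  intros Hpsi; pose proof (resolvent_equation z psi 0 Hpsi) as H; cbn [L0 chi0] in H.
  unfold xi; rewrite phi_1.
  transitivity (Cxsub (Cxmul z (psi O)) (Cxadd (Cxopp (psi 1%nat)) (psi O))); [ring|].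
  rewrite H; ring.
Qed.

Definition is_RInt_0_inf (f : R -> R) (l : R) : Prop :=
  (forall T, 0 <= T -> ex_RInt f 0 T) /\ is_lim (fun T => RInt f 0 T) p_infty l.

Lemma is_RInt_lin (f g : R -> R) (p q a b : R) :
  ex_RInt f a b -> ex_RInt g a b ->
  is_RInt (fun t => p * f t + q * g t) a b (p * RInt f a b + q * RInt g a b).
Proof.
  intros Hf Hg.
  exact (is_RInt_plus _ _ a b _ _ (is_RInt_scal _ a b p _ (RInt_correct f a b Hf))
                                  (is_RInt_scal _ a b q _ (RInt_correct g a b Hg))).
Qed.

Lemma is_RInt_0_inf_ext (f g : R -> R) (l : R) :
  (forall t, 0 <= t -> f t = g t) -> is_RInt_0_inf f l -> is_RInt_0_inf g l.
Proof.
  intros Hfg [Hf Hl]; split.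
  - intros T HT; apply (ex_RInt_ext f); [|exact (Hf T HT)].
    intros t; rewrite Rmin_left by lra; intros [Ht _]; apply Hfg; lra.
  - apply (is_lim_ext_loc (fun T => RInt f 0 T)); [|exact Hl].
    exists 0; intros T HT; apply RInt_ext.
    intros t; rewrite Rmin_left by lra; intros [Ht _]; apply Hfg; lra.
Qed.

Lemma is_RInt_0_inf_lin (f g : R -> R) (p q a b : R) :
  is_RInt_0_inf f a -> is_RInt_0_inf g b ->
  is_RInt_0_inf (fun t => p * f t + q * g t) (p * a + q * b).
Proof.
  intros [Hf Lf] [Hg Lg]; split.
  - intros T HT; eexists; apply is_RInt_lin; auto.
  - apply (is_lim_ext_loc (fun T => p * RInt f 0 T + q * RInt g 0 T)).
    + exists 0; intros T HT; symmetry; apply is_RInt_unique, is_RInt_lin; apply Hf || apply Hg; lra.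
    + apply is_lim_plus'; [exact (is_lim_scal_l _ p _ _ Lf)|exact (is_lim_scal_l _ q _ _ Lg)].
Qed.

Lemma is_RInt_0_inf_scal (f : R -> R) (c l : R) :
  is_RInt_0_inf f l -> is_RInt_0_inf (fun t => c * f t) (c * l).
Proof.
  intros H; pose proof (is_RInt_0_inf_lin _ _ c 0 _ _ H H) as H0.
  replace (c * l + 0 * l) with (c * l) in H0 by ring.
  refine (is_RInt_0_inf_ext _ _ _ _ H0); intros t _; ring.
Qed.

Definition is_Cxint_0_inf (F : R -> Cx) (l : Cx) : Prop :=
  is_RInt_0_inf (fun t => Re (F t)) (Re l) /\ is_RInt_0_inf (fun t => Im (F t)) (Im l).

Lemma is_Cxint_0_inf_improper (F : R -> Cx) (l : Cx) :
  is_Cxint_0_inf F l -> improper_integral_0_inf F l.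
Proof.
  intros [[Hr Lr] [Hi Li]] eps Heps.
  apply is_lim_spec in Lr, Li.
  destruct (Lr (mkposreal eps Heps)) as [M1 H1], (Li (mkposreal eps Heps)) as [M2 H2].
  exists (Rmax 0 (Rmax M1 M2 + 1)); intros T HT.
  pose proof (Rmax_l 0 (Rmax M1 M2 + 1)); pose proof (Rmax_r 0 (Rmax M1 M2 + 1)).
  pose proof (Rmax_l M1 M2); pose proof (Rmax_r M1 M2).
  exists (ex_RInt_Reals_0 _ _ _ (Hr T ltac:(lra))), (ex_RInt_Reals_0 _ _ _ (Hi T ltac:(lra))).
  rewrite <- !RInt_Reals; split; [apply H1|apply H2]; lra.
Qed.

Lemma is_Cxint_0_inf_ext (F G : R -> Cx) (l : Cx) :
  (forall t, 0 <= t -> F t = G t) -> is_Cxint_0_inf F l -> is_Cxint_0_inf G l.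
Proof.
  intros H [Hr Hi]; split; (eapply is_RInt_0_inf_ext; [|eassumption]);
    intros t Ht; cbv beta; rewrite H by exact Ht; reflexivity.
Qed.

Lemma is_Cxint_0_inf_lin (F G : R -> Cx) (c d a b : Cx) :
  is_Cxint_0_inf F a -> is_Cxint_0_inf G b ->
  is_Cxint_0_inf (fun t => Cxadd (Cxmul c (F t)) (Cxmul d (G t)))
                 (Cxadd (Cxmul c a) (Cxmul d b)).
Proof.
  intros [Fr Fi] [Gr Gi]; split.
  - pose proof (is_RInt_0_inf_lin _ _ 1 1 _ _
      (is_RInt_0_inf_lin _ _ (Re c) (- Im c) _ _ Fr Fi)
      (is_RInt_0_inf_lin _ _ (Re d) (- Im d) _ _ Gr Gi)) as H.
    simpl; replace (Re c * Re a - Im c * Im a + (Re d * Re b - Im d * Im b))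
      with (1 * (Re c * Re a + - Im c * Im a) + 1 * (Re d * Re b + - Im d * Im b)) by ring.
    eapply is_RInt_0_inf_ext; [|exact H]; intros t _; simpl; ring.
  - pose proof (is_RInt_0_inf_lin _ _ 1 1 _ _
      (is_RInt_0_inf_lin _ _ (Re c) (Im c) _ _ Fi Fr)
      (is_RInt_0_inf_lin _ _ (Re d) (Im d) _ _ Gi Gr)) as H.
    simpl; replace (Re c * Im a + Im c * Re a + (Re d * Im b + Im d * Re b))
      with (1 * (Re c * Im a + Im c * Re a) + 1 * (Re d * Im b + Im d * Re b)) by ring.
    eapply is_RInt_0_inf_ext; [|exact H]; intros t _; simpl; ring.
Qed.

Lemma is_Cxint_0_inf_RtoCx (f : R -> R) (l : R) :
  is_RInt_0_inf f l -> is_Cxint_0_inf (fun t => RtoCx (f t)) (RtoCx l).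
Proof.
  intros H; split; [exact H|simpl].
  pose proof (is_RInt_0_inf_scal _ 0 _ H) as H0; rewrite Rmult_0_l in H0.
  eapply is_RInt_0_inf_ext; [|exact H0]; intros t _; simpl; ring.
Qed.

Lemma pow_div_fact_le_exp (T : R) (n : nat) : 0 <= T -> T ^ n / INR (fact n) <= exp T.
Proof.
  intros HT; eapply Rle_trans; [|exact (exp_ge_taylor T n HT)].
  apply (sum_f_R0_last_le (fun k => T ^ k / INR (fact k))); intros k.
  pose proof (pow_le T k HT); pose proof (INR_fact_lt_0 k).
  apply Rmult_le_pos; [assumption|left; apply Rinv_0_lt_compat; assumption].
Qed.

Lemma exp_neg_mul_pow_lim (n : nat) : is_lim (fun T => exp (- T) * T ^ n) p_infty 0.
Proof.
  apply (is_lim_le_le_loc (fun _ => 0) (fun T => INR (fact (S n)) * / T)).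
  - exists 0; intros T HT.
    pose proof (pow_div_fact_le_exp T (S n) ltac:(lra)) as Hexp.
    pose proof (INR_fact_lt_0 (S n)); pose proof (exp_pos T); pose proof (pow_lt T n HT).
    rewrite exp_Ropp; simpl in Hexp; split.
    + apply Rmult_le_pos; [left; apply Rinv_0_lt_compat|]; lra.
    + apply (Rmult_le_reg_r (exp T * T)); [nra|].
      replace (/ exp T * T ^ n * (exp T * T)) with (T * T ^ n) by (field; lra).
      replace (INR (fact (S n)) * / T * (exp T * T)) with (exp T * INR (fact (S n)))
        by (field; lra).
      apply (Rmult_le_compat_r (INR (fact (S n)))) in Hexp; [|lra].
      unfold Rdiv in Hexp; rewrite Rmult_assoc, Rinv_l in Hexp; lra.
  - apply is_lim_const.
  - replace (Finite 0) with (Rbar_mult (INR (fact (S n))) (Rbar_inv p_infty))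
      by (simpl; f_equal; ring).
    apply is_lim_scal_l, is_lim_inv; [apply is_lim_id|discriminate].
Qed.

Lemma ex_RInt_exp_neg_mul_pow (k : nat) (a b : R) :
  ex_RInt (fun t => exp (- t) * t ^ k) a b.
Proof.
  apply (@ex_RInt_continuous R_CompleteNormedModule); intros t _.
  apply (@ex_derive_continuous R_AbsRing R_NormedModule); auto_derive; trivial.
Qed.

Lemma RInt_exp_neg (T : R) : RInt (fun t => exp (- t) * t ^ 0) 0 T = 1 - exp (- T) * T ^ 0.
Proof.
  apply is_RInt_unique.
  replace (1 - exp (- T) * T ^ 0) with (minus (- exp (- T)) (- exp (- 0)))
    by (rewrite Ropp_0, exp_0; unfold minus, plus, opp; simpl; ring).
  apply (is_RInt_derive (fun t => - exp (- t))).
  - intros t _; auto_derive; [trivial|simpl; ring].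
  - intros t _; apply (@ex_derive_continuous R_AbsRing R_NormedModule); auto_derive; trivial.
Qed.

Lemma RInt_exp_neg_mul_pow_S (k : nat) (T : R) :
  RInt (fun t => exp (- t) * t ^ S k) 0 T =
  INR (S k) * RInt (fun t => exp (- t) * t ^ k) 0 T - exp (- T) * T ^ S k.
Proof.
  assert (Hparts : is_RInt (fun t => 1 * (exp (- t) * t ^ S k) + - INR (S k) * (exp (- t) * t ^ k))
                     0 T (minus (- exp (- T) * T ^ S k) (- exp (- 0) * 0 ^ S k))).
  { apply (is_RInt_derive (fun t => - exp (- t) * t ^ S k)).
    - intros t _; auto_derive; [trivial|].
      change (match k with O => 1 | S _ => INR k + 1 end) with (INR (S k)); simpl; ring.
    - intros t _; apply (@ex_derive_continuous R_AbsRing R_NormedModule); auto_derive; trivial. }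
  pose proof (is_RInt_lin _ _ 1 (- INR (S k)) 0 T
                (ex_RInt_exp_neg_mul_pow (S k) 0 T) (ex_RInt_exp_neg_mul_pow k 0 T)) as Hlin.
  apply (@is_RInt_unique R_CompleteNormedModule) in Hparts, Hlin; rewrite Hparts in Hlin.
  replace (minus (- exp (- T) * T ^ S k) (- exp (- 0) * 0 ^ S k)) with (- exp (- T) * T ^ S k)
    in Hlin by (unfold minus, plus, opp; simpl; ring).
  lra.
Qed.

Lemma gamma_moment (k : nat) : is_RInt_0_inf (fun t => exp (- t) * t ^ k) (INR (fact k)).
Proof.
  split; [intros; apply ex_RInt_exp_neg_mul_pow|].
  induction k as [|k IH].
  - apply (is_lim_ext_loc (fun T => 1 * 1 + -1 * (exp (- T) * T ^ 0))).
    + exists 0; intros T _; rewrite RInt_exp_neg; ring.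
    + replace (INR (fact 0)) with (1 * 1 + -1 * 0) by (simpl; ring).
      apply is_lim_plus'; [apply is_lim_const|].
      exact (is_lim_scal_l _ (-1) _ _ (exp_neg_mul_pow_lim 0)).
  - apply (is_lim_ext_loc (fun T => INR (S k) * RInt (fun t => exp (- t) * t ^ k) 0 T
                                    + -1 * (exp (- T) * T ^ S k))).
    + exists 0; intros T _; rewrite RInt_exp_neg_mul_pow_S; ring.
    + replace (INR (fact (S k))) with (INR (S k) * INR (fact k) + -1 * 0)
        by (rewrite fact_simpl, mult_INR; ring).
      apply is_lim_plus'; [exact (is_lim_scal_l _ _ _ _ IH)|].
      exact (is_lim_scal_l _ (-1) _ _ (exp_neg_mul_pow_lim (S k))).
Qed.

Lemma gamma_moment_poly (a : nat -> R) (n : nat) :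
  is_RInt_0_inf (fun t => exp (- t) * sum_f_R0 (fun k => a k * t ^ k) n)
                (sum_f_R0 (fun k => a k * INR (fact k)) n).
Proof.
  induction n as [|n IH].
  - eapply is_RInt_0_inf_ext; [|exact (is_RInt_0_inf_scal _ (a O) _ (gamma_moment 0))].
    intros t _; simpl; ring.
  - pose proof (is_RInt_0_inf_lin _ _ 1 (a (S n)) _ _ IH (gamma_moment (S n))) as H.
    simpl sum_f_R0; rewrite <- (Rmult_1_l (sum_f_R0 _ n)).
    eapply is_RInt_0_inf_ext; [|exact H]; intros t _; simpl; ring.
Qed.

Lemma alternating_binomial_sum (n : nat) :
  (1 <= n)%nat -> sum_f_R0 (fun k => C n k * (-1) ^ k) n = 0.
Proof.
  intros Hn; transitivity ((-1 + 1) ^ n).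
  - rewrite binomial; apply sum_eq; intros k _; rewrite pow1; ring.
  - replace (-1 + 1) with 0 by ring; apply pow_i; lia.
Qed.

Lemma phi_RtoCx (t : R) (n : nat) :
  phi (RtoCx t) n = RtoCx (sum_f_R0 (fun k => C n k / INR (fact k) * (-1) ^ k * t ^ k) n).
Proof.
  unfold phi; rewrite <- Cxsum_RtoCx; apply Cxsum_ext; intros k _.
  replace (Cxopp (RtoCx t)) with (RtoCx (-1 * t)) by (apply Cx_eq; simpl; ring).
  rewrite Cxpow_RtoCx, <- RtoCx_mul, Rpow_mult_distr; f_equal; ring.
Qed.

Lemma laguerre_mean_zero (n : nat) : (1 <= n)%nat ->
  is_Cxint_0_inf (fun t => Cxmul (RtoCx (exp (- t))) (phi (RtoCx t) n)) Cx0.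
Proof.
  intros Hn.
  pose proof (gamma_moment_poly (fun k => C n k / INR (fact k) * (-1) ^ k) n) as H.
  replace (sum_f_R0 _ n) with 0 in H.
  - eapply is_Cxint_0_inf_ext; [|exact (is_Cxint_0_inf_RtoCx _ _ H)].
    intros t _; rewrite phi_RtoCx, RtoCx_mul; reflexivity.
  - rewrite <- (alternating_binomial_sum n Hn); apply sum_eq; intros k _.
    pose proof (INR_fact_neq_0 k); field; assumption.
Qed.

Definition resolvent_integrand (z : Cx) (x : nat) (eta : R) : Cx :=
  Cxmul (RtoCx (exp (- eta)))
        (Cxmul (Cxinv (Cxsub (RtoCx eta) z)) (Cxsub (phi (RtoCx eta) x) (phi z x))).

Section ResolventIntegrand.

Variable z : Cx.
Hypothesis Hz : not_in_nonneg_reals z.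

Lemma resolvent_integrand_0 (t : R) :
  resolvent_integrand z 0 t = RtoCx (0 * (exp (- t) * t ^ 0)).
Proof. unfold resolvent_integrand; rewrite !phi_0; apply Cx_eq; simpl; ring. Qed.

Lemma resolvent_integrand_1 (t : R) : 0 <= t ->
  resolvent_integrand z 1 t = RtoCx (-1 * (exp (- t) * t ^ 0)).
Proof.
  intros Ht; unfold resolvent_integrand; rewrite !phi_1.
  transitivity (Cxopp (RtoCx (exp (- t)))); [|apply Cx_eq; simpl; ring].
  field; apply Cxsub_RtoCx_neq0; assumption.
Qed.

Lemma resolvent_integrand_recurrence (m : nat) (t : R) : 0 <= t ->
  Cxmul (RtoCx (INR (S m) + 1)) (resolvent_integrand z (S (S m)) t) =
  Cxsub (Cxsub (Cxmul (Cxsub (RtoCx (2 * INR (S m) + 1)) z) (resolvent_integrand z (S m) t))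
               (Cxmul (RtoCx (INR (S m))) (resolvent_integrand z m t)))
        (Cxmul (RtoCx (exp (- t))) (phi (RtoCx t) (S m))).
Proof.
  intros Ht; unfold resolvent_integrand.
  transitivity (Cxmul (RtoCx (exp (- t)))
                  (Cxmul (Cxinv (Cxsub (RtoCx t) z))
                     (Cxsub (Cxmul (RtoCx (INR (S m) + 1)) (phi (RtoCx t) (S (S m))))
                            (Cxmul (RtoCx (INR (S m) + 1)) (phi z (S (S m))))))); [ring|].
  rewrite (phi_recurrence (RtoCx t) m), (phi_recurrence z m).
  field; apply Cxsub_RtoCx_neq0; assumption.
Qed.

Lemma resolvent_integrand_integral (f : nat -> Cx) :
  laguerre_recurrence z f -> f 0%nat = Cx0 -> f 1%nat = Cxopp Cx1 ->
  forall x, is_Cxint_0_inf (resolvent_integrand z x) (f x).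
Proof.
  intros Hrec H0 H1 x.
  enough (Hpair : forall m, is_Cxint_0_inf (resolvent_integrand z m) (f m) /\
                            is_Cxint_0_inf (resolvent_integrand z (S m)) (f (S m)))
    by exact (proj1 (Hpair x)).
  induction m as [|m [IHm IHSm]]; split.
  - replace (f 0%nat) with (RtoCx (0 * INR (fact 0))) by (rewrite H0; apply Cx_eq; simpl; ring).
    eapply is_Cxint_0_inf_ext;
      [|exact (is_Cxint_0_inf_RtoCx _ _ (is_RInt_0_inf_scal _ 0 _ (gamma_moment 0)))].
    intros t _; symmetry; apply resolvent_integrand_0.
  - replace (f 1%nat) with (RtoCx (-1 * INR (fact 0))) by (rewrite H1; apply Cx_eq; simpl; ring).
    eapply is_Cxint_0_inf_ext;
      [|exact (is_Cxint_0_inf_RtoCx _ _ (is_RInt_0_inf_scal _ (-1) _ (gamma_moment 0)))].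
    intros t Ht; symmetry; apply resolvent_integrand_1, Ht.
  - exact IHSm.
  - set (A := RtoCx (INR (S m) + 1)).
    assert (HA : A <> Cx0) by (apply RtoCx_neq0; pose proof (pos_INR (S m)); lra).
    set (a := Cxinv A).
    pose proof (is_Cxint_0_inf_lin _ _ Cx1 (Cxopp a) _ _
      (is_Cxint_0_inf_lin _ _ (Cxmul a (Cxsub (RtoCx (2 * INR (S m) + 1)) z))
                              (Cxopp (Cxmul a (RtoCx (INR (S m))))) _ _ IHSm IHm)
      (laguerre_mean_zero (S m) ltac:(lia))) as Hcomb.
    replace (f (S (S m))) with
      (Cxadd (Cxmul Cx1 (Cxadd (Cxmul (Cxmul a (Cxsub (RtoCx (2 * INR (S m) + 1)) z)) (f (S m)))
                               (Cxmul (Cxopp (Cxmul a (RtoCx (INR (S m))))) (f m))))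
             (Cxmul (Cxopp a) Cx0)).
    + refine (is_Cxint_0_inf_ext _ _ _ _ Hcomb); intros t Ht; symmetry.
      transitivity (Cxmul a (Cxmul A (resolvent_integrand z (S (S m)) t)));
        [unfold a; field; exact HA|].
      unfold A; rewrite resolvent_integrand_recurrence by exact Ht; ring.
    + transitivity (Cxmul a (Cxmul A (f (S (S m))))); [|unfold a; field; exact HA].
      unfold A; rewrite Hrec; ring.
Qed.

End ResolventIntegrand.

Theorem mainTheorem8 (z : Cx) (psi : nat -> Cx) (x : nat) :
  not_in_nonneg_reals z ->
  is_resolvent_vector z psi ->
  improper_integral_0_inf
    (fun eta : R =>
       Cxmul (RtoCx (exp (- eta)))
             (Cxmul (Cxinv (Cxsub (RtoCx eta) z))
                    (Cxsub (phi (RtoCx eta) x) (phi z x))))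
    (xi z psi x).
Proof.
  intros Hz Hpsi.
  apply is_Cxint_0_inf_improper.
  apply (resolvent_integrand_integral z Hz (xi z psi)).
  - apply xi_recurrence, Hpsi.
  - apply xi_0.
  - apply xi_1, Hpsi.
Qed.
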